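(* Consider the controlled SEIR system described in the context, with stage cost weight $\lambda\in(0,1]$. There exists a constant $C\in\mathbb{R}_{\geq 0}$ such that $$J_{\infty}(\mathbf{x}^0,\mathbf{u}_{\mathrm{nom}})\leq C\quad\text{for all }\mathbf{x}^0\in\mathbb{X}_{\mathrm{M}},$$ where $\mathbf{u}_{\mathrm{nom}}\in\mathcal{U}_\infty$ denotes the constant input $\mathbf{u}_{\mathrm{nom}}(t)=(\beta_{\mathrm{nom}},\gamma_{\mathrm{nom}})^\top$ for all $t\ge 0$.
   Context: Parameters: $\eta>0$, $0<\beta_{\min}<\beta_{\mathrm{nom}}$, $0<\gamma_{\mathrm{nom}}<\gamma_{\max}$, $I_{\max}\in(0,1]$. State $\mathbf{x}=(x_1,x_2,x_3)^\top\in\mathbb{R}^3$ (susceptible, exposed, infectious proportions), input $\mathbf{u}=(u_1,u_2)^\top$, dynamics $\dot{\mathbf{x}}=f(\mathbf{x},\mathbf{u})$ with $f(\mathbf{x},\mathbf{u})=(-u_1x_1x_3,\; u_1x_1x_3-\eta x_2,\; \eta x_2-u_2x_3)^\top$. Input constraint set $\mathbb{U}=[\beta_{\min},\beta_{\mathrm{nom}}]\times[\gamma_{\mathrm{nom}},\gamma_{\max}]$; $\mathcal{U}_\infty$ is the set of Lebesgue measurable functions $[0,\infty)\to\mathbb{U}$. State constraint set $\mathbb{X}=\{\mathbf{x}\in[0,1]^3: x_3\le I_{\max},\ x_1+x_2+x_3\le 1\}$. For $\mathbf{x}^0\in[0,1]^3$ with $x_1^0+x_2^0+x_3^0\le1$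 and $\mathbf{u}\in\mathcal{U}_\infty$, $\mathbf{x}(t;\mathbf{x}^0,\mathbf{u})$ denotes the unique absolutely continuous solution (it stays in $[0,1]^3$). Let $\bar x_1=\gamma_{\mathrm{nom}}/\beta_{\mathrm{nom}}$, $\bar x_2=\gamma_{\mathrm{nom}}I_{\max}/\eta$ and $\mathbb{X}_{\mathrm{M}}=\{\mathbf{x}\in\mathbb{X}: x_1\le\bar x_1,\ x_2\le\bar x_2\}$. Stage cost, for fixed $\lambda\in(0,1]$: $\ell(\mathbf{x},\mathbf{u})=\lambda(x_2^2+x_3^2)+(1-\lambda)\|\mathbf{u}-\mathbf{u}_{\mathrm{nom}}\|^2$ with $\mathbf{u}_{\mathrm{nom}}=(\beta_{\mathrm{nom}},\gamma_{\mathrm{nom}})^\top$ and $\|\cdot\|$ the Euclidean norm. Cost functional $J_\infty(\mathbf{x}^0,\mathbf{u})=\int_0^\infty \ell(\mathbf{x}(s;\mathbf{x}^0,\mathbf{u}),\mathbf{u}(s))\,ds$. *)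

From HB Require Import structures.
From mathcomp Require Import all_boot all_order all_algebra.
From mathcomp Require Import all_classical all_reals all_analysis.
Set Implicit Arguments. Unset Strict Implicit. Unset Printing Implicit Defensive.
Import Order.TTheory GRing.Theory Num.Theory.
Import numFieldNormedType.Exports.
Local Open Scope classical_set_scope.
Local Open Scope ring_scope.

Definition in_X {R : realType} (Imax x1 x2 x3 : R) : Prop :=
  [/\ 0 <= x1 <= 1, 0 <= x2 <= 1, 0 <= x3 <= 1, x3 <= Imax & x1 + x2 + x3 <= 1].

Definition in_XM {R : realType} (eta bnom gnom Imax x1 x2 x3 : R) : Prop :=
  [/\ in_X Imax x1 x2 x3, x1 <= gnom / bnom & x2 <= gnom * Imax / eta].

Definition stage_cost {R : realType} (lam bnom gnom x2 x3 u1 u2 : R) : R :=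
  lam * (x2 ^+ 2 + x3 ^+ 2) + (1 - lam) * ((u1 - bnom) ^+ 2 + (u2 - gnom) ^+ 2).

Definition J_inf {R : realType} (lam bnom gnom : R) (x1 x2 x3 u1 u2 : R -> R)
  : \bar R :=
  (\int[@lebesgue_measure R]_(s in `[0%R, +oo[%classic)
     (stage_cost lam bnom gnom (x2 s) (x3 s) (u1 s) (u2 s))%:E)%E.

Definition seir_solution_const {R : realType} (eta b g x10 x20 x30 : R)
  (x1 x2 x3 : R -> R) : Prop :=
  [/\ x1 0 = x10, x2 0 = x20, x3 0 = x30,
      [/\ {within `[0%R, +oo[%classic, continuous x1},
          {within `[0%R, +oo[%classic, continuous x2} &
          {within `[0%R, +oo[%classic, continuous x3}] &
      forall t : R, 0 < t ->
        [/\ is_derive t 1 x1 (- b * x1 t * x3 t),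
            is_derive t 1 x2 (b * x1 t * x3 t - eta * x2 t) &
            is_derive t 1 x3 (eta * x2 t - g * x3 t)]].

From HB Require Import structures.
From mathcomp Require Import all_boot all_order all_algebra.
From mathcomp Require Import all_classical all_reals all_analysis.
From mathcomp Require Import measurable_realfun ring lra.
Import Order.TTheory GRing.Theory Num.Theory.
Import numFieldNormedType.Exports.
Local Open Scope classical_set_scope.
Local Open Scope ring_scope.

(** Along a solution the state stays in the nonnegative orthant: the squared
  distance [V] to the orthant vanishes at time 0 and, on every bounded time
  interval, satisfies [V' <= K V], so it stays 0 by a Grönwall argument.  Then
  the total population [x1 + x2 + x3] is nonincreasing (its derivative is
  [- gamma x3]), every coordinate stays in [0, 1], and the nominal stage cost
  [lambda (x2^2 + x3^2)] is at most [x2 + x3].  Finally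
  [F = - (x1 + x2) / eta - (x1 + x2 + x3) / gamma] satisfies [F' = x2 + x3] and
  [F <= 0], so the integral of [x2 + x3] over [0, oo) is at most
  [- F 0 <= 1 / eta + 1 / gamma]. *)

Section NonposPart.
Context {R : realType}.
Implicit Types y : R.

Definition nonpos_part y : R := Num.min y 0.

Lemma nonpos_part_le0 y : nonpos_part y <= 0.
Proof. by rewrite /nonpos_part ge_min lexx orbT. Qed.

Lemma nonpos_part_le y : nonpos_part y <= y.
Proof. by rewrite /nonpos_part ge_min lexx. Qed.

Lemma nonpos_part_id0 {y} : 0 <= y -> nonpos_part y = 0.
Proof. by move=> /min_idPr. Qed.

Lemma nonpos_part_lt0 {y} : y < 0 -> nonpos_part y = y.
Proof. by move=> /ltW /min_idPl. Qed.

Lemma sqr_nonpos_part y : nonpos_part y ^+ 2 = y * nonpos_part y.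
Proof.
have [/nonpos_part_id0 ->|/nonpos_part_lt0 ->] := leP 0 y.
all: by rewrite expr2 ?mulr0.
Qed.

Lemma sqr_nonpos_part_le0 y : nonpos_part y ^+ 2 <= 0 -> 0 <= y.
Proof. by have [//|y_lt0] := leP 0 y; rewrite nonpos_part_lt0 // => ?; nra. Qed.

Lemma continuous_nonpos_part : continuous nonpos_part.
Proof. by move=> y; apply: (@continuous_min _ _ id (cst 0)) => //; exact: cvg_cst. Qed.

Lemma is_derive_sqr_nonpos_part (a : R) :
  is_derive a 1 (fun y => nonpos_part y ^+ 2) (2 * nonpos_part a).
Proof.
have [a_lt0|a_gt0|->] := ltgtP a 0.
- rewrite nonpos_part_lt0 //.
  have : is_derive a 1 (fun y : R => y ^+ 2) (2 * a).
    by apply: is_derive_eq; rewrite mulr_natl mulr2n [_%:A]mulr1.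
  apply: near_eq_is_derive; near=> y; rewrite nonpos_part_lt0 //.
  by near: y; exact: lt_nbhsl.
- rewrite nonpos_part_id0 ?(ltW a_gt0) // mulr0.
  apply: near_eq_is_derive (is_derive_cst 0 a 1); near=> y.
  rewrite nonpos_part_id0 ?expr0n // ltW //; near: y; exact: lt_nbhsr.
- rewrite nonpos_part_id0 // mulr0.
  set f := fun y => nonpos_part y ^+ 2.
  have quot : (fun h => h^-1 *: ((f \o shift 0) (h *: 1) - f 0)) @ 0^' --> (0 : R).
    rewrite -[X in _ --> X](nonpos_part_id0 (lexx (0 : R))).
    apply: (@cvg_trans _ (nonpos_part h @[h --> 0^'])); last first.
      exact: cvg_within_filter (continuous_nonpos_part 0).
    apply: near_eq_cvg; near=> h.
    rewrite /= /f [nonpos_part 0]nonpos_part_id0 // expr0n subr0 addr0.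
    rewrite [h%:A]mulr1 sqr_nonpos_part [_ *: _]mulrA mulVf ?mul1r //.
    by near: h; exact: nbhs_dnbhs_neq.
  by apply: DeriveDef; [apply/cvg_ex; exists 0 | apply: cvg_lim].
Unshelve. all: by end_near. Qed.

Lemma continuous_sqr_nonpos_part : continuous (fun y => nonpos_part y ^+ 2).
Proof.
by move=> y; apply/differentiable_continuous/derivable1_diffP; case: (is_derive_sqr_nonpos_part y).
Qed.

Lemma nonpos_part_mul_ge {M y z : R} : `|y| <= M -> `|z| <= M ->
  M * (nonpos_part y + nonpos_part z) <= y * z.
Proof.
rewrite !ler_norml => /andP[yl yu] /andP[zl zu].
have [y0|y0] := leP 0 y; have [z0|z0] := leP 0 z;
  rewrite ?(nonpos_part_id0 y0) ?(nonpos_part_id0 z0);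
  rewrite ?(nonpos_part_lt0 y0) ?(nonpos_part_lt0 z0); nra.
Qed.

Definition sqdist_orthant (y1 y2 y3 : R) :=
  nonpos_part y1 ^+ 2 + nonpos_part y2 ^+ 2 + nonpos_part y3 ^+ 2.

Lemma sqdist_orthant_le0 (y1 y2 y3 : R) : sqdist_orthant y1 y2 y3 <= 0 ->
  [/\ 0 <= y1, 0 <= y2 & 0 <= y3].
Proof.
rewrite /sqdist_orthant => D_le0.
have := sqr_ge0 (nonpos_part y1); have := sqr_ge0 (nonpos_part y2).
have := sqr_ge0 (nonpos_part y3).
by split; apply: sqr_nonpos_part_le0; lra.
Qed.

(* The left-hand side is the derivative of [sqdist_orthant] along the SEIR
   vector field. *)
Lemma seir_sqdist_orthant_growth (eta b g M y1 y2 y3 : R) :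
  0 < eta -> 0 < b -> 0 < g -> `|y1| <= M -> `|y3| <= M ->
  2 * nonpos_part y1 * (- b * y1 * y3)
  + 2 * nonpos_part y2 * (b * y1 * y3 - eta * y2)
  + 2 * nonpos_part y3 * (eta * y2 - g * y3)
  <= (4 * b * M + 2 * eta) * sqdist_orthant y1 y2 y3.
Proof.
move=> eta_gt0 b_gt0 g_gt0 y1M y3M.
have M_ge0 : 0 <= M := le_trans (normr_ge0 _) y1M.
have bM_ge0 : 0 <= b * M := mulr_ge0 (ltW b_gt0) M_ge0.
have y3M_ge0 : 0 <= y3 + M by move: y3M; rewrite ler_norml -subr_ge0 opprK => /andP[].
have := nonpos_part_mul_ge y1M y3M; have := nonpos_part_le y2.
have := (nonpos_part_le0 y1, nonpos_part_le0 y2, nonpos_part_le0 y3).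
have := (sqr_nonpos_part y1, sqr_nonpos_part y2, sqr_nonpos_part y3).
rewrite /sqdist_orthant.
move: (nonpos_part y1) (nonpos_part y2) (nonpos_part y3) => a1 a2 a3.
move=> [[e1 e2] e3] [[a1_le0 a2_le0] a3_le0] a2_le prod_ge.
have t1 : 2 * a1 * (- b * y1 * y3) <= 2 * b * M * a1 ^+ 2.
  have := mulr_ge0 (ltW b_gt0) (mulr_ge0 y3M_ge0 (sqr_ge0 a1)).
  have : b * y3 * a1 ^+ 2 = b * y3 * (y1 * a1) by rewrite e1.
  lra.
have t2 : 2 * a2 * (b * y1 * y3 - eta * y2) <= b * M * (a1 ^+ 2 + 2 * a2 ^+ 2 + a3 ^+ 2).
  have a2N_ge0 : 0 <= - a2 by rewrite oppr_ge0.
  have prod_gap : 0 <= y1 * y3 - M * (a1 + a3) by rewrite subr_ge0.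
  have := mulr_ge0 (ltW b_gt0) (mulr_ge0 a2N_ge0 prod_gap).
  have := mulr_ge0 bM_ge0 (addr_ge0 (sqr_ge0 (a1 - a2)) (sqr_ge0 (a3 - a2))).
  have := mulr_ge0 (ltW eta_gt0) (sqr_ge0 a2).
  have : eta * a2 ^+ 2 = eta * (y2 * a2) by rewrite e2.
  lra.
have t3 : 2 * a3 * (eta * y2 - g * y3) <= eta * (a2 ^+ 2 + a3 ^+ 2).
  have a3N_ge0 : 0 <= - a3 by rewrite oppr_ge0.
  have y2_gap : 0 <= y2 - a2 by rewrite subr_ge0.
  have := mulr_ge0 (ltW eta_gt0) (mulr_ge0 a3N_ge0 y2_gap).
  have := mulr_ge0 (ltW eta_gt0) (sqr_ge0 (a2 - a3)).
  have := mulr_ge0 (ltW g_gt0) (sqr_ge0 a3).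
  have : g * a3 ^+ 2 = g * (y3 * a3) by rewrite e3.
  lra.
have := sqr_ge0 a1; have := sqr_ge0 a2; have := sqr_ge0 a3.
nra.
Qed.

End NonposPart.

Section RealAnalysis.
Context {R : realType}.

Lemma continuous_itvcc_bounded {f : R -> R} {a b : R} : a <= b ->
  {within `[a, b], continuous f} -> exists M, forall s, s \in `[a, b] -> `|f s| <= M.
Proof.
move=> ab cf.
have [c _ c_max] := EVT_max ab (fun x => continuous_comp (cf x) (@norm_continuous _ R _)).
by exists `|f c|; exact: c_max.
Qed.

Lemma gronwall_le {G dG : R -> R} {K a b : R} : a <= b ->
  {within `[a, b], continuous G} ->
  (forall s, s \in `]a, b[ -> is_derive s 1 G (dG s)) ->
  (forall s, s \in `]a, b[ -> dG s <= K * G s) ->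
  G b <= G a * expR (K * (b - a)).
Proof.
move=> ab cG dG_eq dG_le.
pose E (s : R) := expR (- K * s).
have dE (s : R) : is_derive s 1 E (- K * E s).
  have dlin : is_derive s 1 (fun s : R => - K * s) (- K).
    by apply: is_derive_eq (is_deriveZ (- K) (is_derive_id s 1)) _; rewrite [_ *: _]mulr1.
  by rewrite mulrC; exact: is_derive1_comp (is_derive_expR _) dlin.
have dGE s (sab : s \in `]a, b[) := is_deriveM (dG_eq s sab) (dE s).
have GE_noninc : {in `[a, b] &, {homo G * E : x y /~ x <= y}}.
  apply: ler0_derive1_le_cc => [s /dGE []//|s sab|].
  - rewrite derive1E (@derive_val _ _ _ _ _ _ _ (dGE s sab)).
    have E_gt0 : 0 < E s := expR_gt0 _.
    have := dG_le s sab; rewrite /GRing.scale /=; nra.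
  - move=> x; apply: continuousM (cG x) _.
    apply: continuous_subspaceT => y.
    by apply/differentiable_continuous/derivable1_diffP; case: (dE y).
have := GE_noninc b a; rewrite !in_itv /= !lexx ab => /(_ isT isT isT) /=.
rewrite /E -ler_pdivlMr ?expR_gt0 // -expRN -mulrA -expRD.
by congr (_ <= _ * expR _); ring.
Qed.

Lemma ge0_integral_itvcy_le {f F : R -> R} {a B : R} :
  (forall x, a <= x -> 0 <= f x) -> {within `[a, +oo[, continuous f} ->
  {within `[a, +oo[, continuous F} ->
  (forall x, a < x -> is_derive x 1 F (f x)) ->
  (forall x, a <= x -> F x <= B) ->
  (\int[lebesgue_measure]_(x in `[a, +oo[) (f x)%:E <= (B - F a)%:E)%E.
Proof.
move=> f_ge0 cf cF dF F_le.
have F_nd x y : a <= x -> x <= y -> F x <= F y.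
  apply: (ger0_derive1_ndecry _ _ cF) => s; rewrite in_itv /= andbT.
    by move=> /dF[].
  by move=> /[dup] /ltW ? /dF[_]; rewrite derive1E => ->; apply: f_ge0.
pose Fa t := F (Num.max t a).
have Fa_nd : nondecreasing_fun Fa.
  by move=> x y xy; apply: F_nd; [rewrite le_max lexx orbT | exact: le_max2].
have Fa_ub : has_ubound (range Fa).
  by exists B => _ [x _ <-]; rewrite F_le // le_max lexx orbT.
have F_cvg : F x @[x --> +oo] --> sup (range Fa).
  apply: cvg_trans (nondecreasing_cvgr Fa_nd Fa_ub).
  by apply: near_eq_cvg; near=> x; rewrite /Fa max_l //; near: x; exact: nbhs_pinfty_ge.
rewrite (ge0_continuous_FTC2y f_ge0 cf F_cvg).
- rewrite -EFinB lee_fin lerD2r; apply: ge_sup; first by exists (Fa a), a.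
  by move=> _ [x _ <-]; rewrite F_le // le_max lexx orbT.
- by move=> x /dF [].
- exact: ((continuous_within_itvcyP a F).1 cF).2.
- by move=> x; rewrite in_itv /= andbT derive1E => /dF [_ ->].
Unshelve. all: by end_near. Qed.

End RealAnalysis.

Lemma stage_cost_nom {R : realType} (lam bnom gnom y2 y3 : R) :
  stage_cost lam bnom gnom y2 y3 bnom gnom = lam * (y2 ^+ 2 + y3 ^+ 2).
Proof. by rewrite /stage_cost !subrr expr0n /= addr0 mulr0 addr0. Qed.

Lemma stage_cost_nom_le {R : realType} (lam bnom gnom y2 y3 : R) : 0 <= lam <= 1 ->
  0 <= y2 <= 1 -> 0 <= y3 <= 1 -> stage_cost lam bnom gnom y2 y3 bnom gnom <= y2 + y3.
Proof.
move=> /andP[? ?] /andP[? ?] /andP[? ?]; rewrite stage_cost_nom.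
have : y2 ^+ 2 <= y2 by rewrite expr2 ler_piMl.
have : y3 ^+ 2 <= y3 by rewrite expr2 ler_piMl.
have := addr_ge0 (sqr_ge0 y2) (sqr_ge0 y3).
move: (y2 ^+ 2) (y3 ^+ 2) => q2 q3; nra.
Qed.

Section SEIRSolution.
Context {R : realType} {eta b g x10 x20 x30 : R} {x1 x2 x3 : R -> R}.
Hypotheses (eta_gt0 : 0 < eta) (b_gt0 : 0 < b) (g_gt0 : 0 < g).
Hypothesis sol : seir_solution_const eta b g x10 x20 x30 x1 x2 x3.
Hypotheses (x10_ge0 : 0 <= x10) (x20_ge0 : 0 <= x20) (x30_ge0 : 0 <= x30).

Lemma seir_nonneg {T : R} : 0 <= T -> [/\ 0 <= x1 T, 0 <= x2 T & 0 <= x3 T].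
Proof.
have [x1_0 x2_0 x3_0 [c1 c2 c3] dx] := sol; move=> T_ge0.
pose sq (y : R) := nonpos_part y ^+ 2.
pose D := (sq \o x1) + (sq \o x2) + (sq \o x3).
have sub : `[0, T] `<=` `[0, +oo[ by move=> s /=; rewrite !in_itv /= => /andP[-> _].
have [M1 x1M] := continuous_itvcc_bounded T_ge0 (continuous_subspaceW sub c1).
have [M3 x3M] := continuous_itvcc_bounded T_ge0 (continuous_subspaceW sub c3).
pose M := Num.max M1 M3.
have xM s : s \in `[0, T] -> `|x1 s| <= M /\ `|x3 s| <= M.
  by move=> s_in; rewrite !le_max x1M ?x3M ?orbT.
have D_le : D T <= D 0 * expR ((4 * b * M + 2 * eta) * (T - 0)).
  apply: gronwall_le T_ge0 _ _ _.
  - have cx (x : R -> R) :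
        {within `[0, +oo[, continuous x} -> {within `[0, T], continuous (sq \o x)}.
      move=> /(continuous_subspaceW sub) cx s.
      exact: continuous_comp (cx s) (continuous_sqr_nonpos_part _).
    by move=> s; apply: continuousD (continuousD (cx _ c1 s) (cx _ c2 s)) (cx _ c3 s).
  - move=> s; rewrite in_itv /= => /andP[/dx[d1 d2 d3] _].
    have dsq (x : R -> R) (dxs : R) : is_derive s 1 x dxs ->
        is_derive s 1 (sq \o x) (2 * nonpos_part (x s) * dxs).
      exact: is_derive1_comp (is_derive_sqr_nonpos_part _).
    exact: is_deriveD (is_deriveD (dsq _ _ d1) (dsq _ _ d2)) (dsq _ _ d3).
  - move=> s; rewrite in_itv /= => /andP[s_gt0 s_lt].
    have s_in : s \in `[0, T] by rewrite in_itv /= !ltW.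
    have [x1s_le x3s_le] := xM s s_in.
    exact: seir_sqdist_orthant_growth.
have D0 : D 0 = 0.
  change (sq (x1 0) + sq (x2 0) + sq (x3 0) = 0).
  by rewrite /sq x1_0 x2_0 x3_0 !nonpos_part_id0 // expr0n !addr0.
by apply: sqdist_orthant_le0; rewrite D0 mul0r in D_le.
Qed.

Lemma seir_total_le {t : R} : 0 <= t -> x1 t + x2 t + x3 t <= x10 + x20 + x30.
Proof.
have [<- <- <- [c1 c2 c3] dx] := sol; move=> t_ge0.
have dS (s : R) : 0 < s -> is_derive s 1 (x1 + x2 + x3) (- g * x3 s).
  by move=> /dx[d1 d2 d3]; apply: is_derive_eq (is_deriveD (is_deriveD d1 d2) d3) _; ring.
apply: (ler0_derive1_nincry (f := x1 + x2 + x3) _ _ _ (lexx 0) t_ge0).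
- by move=> s; rewrite in_itv /= andbT => /dS[].
- move=> s; rewrite in_itv /= andbT derive1E => /[dup] /ltW /seir_nonneg[_ _ ?].
  by move=> /dS[_ ->]; rewrite mulNr oppr_le0 pmulr_rge0.
- by move=> s; apply: continuousD (continuousD (c1 s) (c2 s)) (c3 s).
Qed.

Lemma seir_integral_exposed_infectious_le :
  (\int[lebesgue_measure]_(s in `[0%R, +oo[) (x2 s + x3 s)%:E
    <= ((x10 + x20) / eta + (x10 + x20 + x30) / g)%:E)%E.
Proof.
have [x1_0 x2_0 x3_0 [c1 c2 c3] dx] := sol.
pose F := - (eta^-1 \*: (x1 + x2) + g^-1 \*: (x1 + x2 + x3)).
have -> : (x10 + x20) / eta + (x10 + x20 + x30) / g = 0 - F 0.
  by rewrite /F !fctE /= x1_0 x2_0 x3_0 sub0r opprK [_ / eta]mulrC [_ / g]mulrC.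
apply: (ge0_integral_itvcy_le (f := x2 + x3)).
- by move=> s /seir_nonneg[_ ? ?]; apply: addr_ge0.
- by move=> s; apply: continuousD (c2 s) (c3 s).
- move=> s; apply: continuousN; apply: continuousD; apply: continuousZ.
  + exact: cst_continuous.
  + exact: continuousD (c1 s) (c2 s).
  + exact: cst_continuous.
  + exact: continuousD (continuousD (c1 s) (c2 s)) (c3 s).
- move=> s /dx[d1 d2 d3].
  apply: is_derive_eq (is_deriveN (is_deriveD (is_deriveZ eta^-1 (is_deriveD d1 d2))
    (is_deriveZ g^-1 (is_deriveD (is_deriveD d1 d2) d3)))) _.
  by rewrite /GRing.scale /= !fctE; field; rewrite !gt_eqF.
- move=> s /seir_nonneg[x1_ge0 x2_ge0 x3_ge0].
  rewrite /F !fctE /GRing.scale /= oppr_le0.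
  by apply: addr_ge0; apply: mulr_ge0; rewrite ?invr_ge0 ?(ltW eta_gt0) ?(ltW g_gt0) //; lra.
Qed.

Lemma J_inf_nom_le_integral (lam : R) : 0 <= lam <= 1 -> x10 + x20 + x30 <= 1 ->
  (J_inf lam b g x1 x2 x3 (fun=> b) (fun=> g)
    <= \int[lebesgue_measure]_(s in `[0%R, +oo[) (x2 s + x3 s)%:E)%E.
Proof.
have [_ _ _ [c1 c2 c3] _] := sol; move=> lam01 x0_le1.
have mD : measurable (`[0%R, +oo[ : set R) := measurable_itv _.
have [mx2 mx3] := (subspace_continuous_measurable_fun mD c2,
                   subspace_continuous_measurable_fun mD c3).
rewrite /J_inf; apply: ge0_le_integral => //.
- move=> s _; rewrite lee_fin (stage_cost_nom lam b g (x2 s) (x3 s)).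
  by case/andP: lam01 => lam_ge0 _; rewrite mulr_ge0 // addr_ge0 ?sqr_ge0.
- apply/measurable_EFinP; apply: measurable_funD; last exact: measurable_cst.
  by apply: measurable_funM => //; apply: measurable_funD; exact: measurable_funX.
- by apply/measurable_EFinP; exact: measurable_funD.
- move=> s; rewrite /= in_itv /= andbT => s_ge0; rewrite lee_fin.
  have [x1_ge0 x2_ge0 x3_ge0] := seir_nonneg s_ge0.
  have := seir_total_le s_ge0.
  by move=> ?; apply: stage_cost_nom_le => //; apply/andP; split => //; lra.
Qed.

End SEIRSolution.

Theorem lemma2 (R : realType) (eta bmin bnom gnom gmax Imax lam : R) :
  0 < eta -> 0 < bmin -> bmin < bnom -> 0 < gnom -> gnom < gmax ->
  0 < Imax -> Imax <= 1 -> 0 < lam -> lam <= 1 ->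
  exists C : R, 0 <= C /\
    forall x10 x20 x30 : R, in_XM eta bnom gnom Imax x10 x20 x30 ->
    forall x1 x2 x3 : R -> R,
      seir_solution_const eta bnom gnom x10 x20 x30 x1 x2 x3 ->
      (J_inf lam bnom gnom x1 x2 x3 (fun _ => bnom) (fun _ => gnom) <= C%:E)%E.
Proof.
move=> eta_gt0 bmin_gt0 bmin_lt_bnom gnom_gt0 _ _ _ lam_gt0 lam_le1.
have bnom_gt0 := lt_trans bmin_gt0 bmin_lt_bnom.
exists (eta^-1 + gnom^-1); split; first by rewrite addr_ge0 // invr_ge0 ltW.
move=> x10 x20 x30 [[/andP[x10_ge0 _] /andP[x20_ge0 _] /andP[x30_ge0 _] _ x0_le1] _ _].
move=> x1 x2 x3 sol.
have lam01 : 0 <= lam <= 1 by rewrite (ltW lam_gt0) lam_le1.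
apply: le_trans (J_inf_nom_le_integral eta_gt0 bnom_gt0 gnom_gt0 sol
  x10_ge0 x20_ge0 x30_ge0 lam lam01 x0_le1) _.
apply: le_trans (seir_integral_exposed_infectious_le eta_gt0 bnom_gt0 gnom_gt0 sol
  x10_ge0 x20_ge0 x30_ge0) _.
by rewrite lee_fin lerD // ler_piMl ?invr_ge0 ?(ltW eta_gt0) ?(ltW gnom_gt0) //; lra.
Qed.
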